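(* Let $c_1,c_2\in\mathbb{R}$ with $|c_1|+|c_2|=1$, $c_1c_2\neq0$ and $|c_1|\neq|c_2|$. Let $c_{2k-1}=c_1$, $c_{2k}=c_2$ for $k\in\mathbb{N}$, and let $J$ be the self-adjoint operator in $l^2(\mathbb{N})$ given by the Jacobi matrix with diagonal entries $q_n=n$ and off-diagonal entries $\lambda_n=c_nn$, i.e. $(Ju)_1=u_1+c_1u_2$, $(Ju)_n=\lambda_{n-1}u_{n-1}+nu_n+\lambda_nu_{n+1}$ for $n\ge2$, on its natural domain $\{u\in l^2(\mathbb{N}):Ju\in l^2(\mathbb{N})\}$. Then $\sigma(J)\cap(-\infty,\frac12)\neq\emptyset$. *)

From Stdlib Require Import Reals Lra.
From Coquelicot Require Import Coquelicot.
Open Scope R_scope.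

(* Sequences are indexed from 0: index i corresponds to the paper's index i+1. *)

Definition cseq (c1 c2 : R) (i : nat) : R := if Nat.even i then c1 else c2.

Definition lam (c1 c2 : R) (i : nat) : R := cseq c1 c2 i * INR (S i).

Definition Jop (c1 c2 : R) (u : nat -> R) (i : nat) : R :=
  match i with
  | O => 1 * u O + lam c1 c2 O * u 1%nat
  | S m => lam c1 c2 m * u m + INR (S i) * u i + lam c1 c2 i * u (S i)
  end.

Definition l2 (u : nat -> R) : Prop := ex_series (fun n => (u n) ^ 2).

Definition l2norm2 (u : nat -> R) : R := Series (fun n => (u n) ^ 2).

Definition Jdom (c1 c2 : R) (u : nat -> R) : Prop := l2 u /\ l2 (Jop c1 c2 u).

Definition in_resolvent (c1 c2 z : R) : Prop :=
  (forall f, l2 f -> exists u, Jdom c1 c2 u /\ forall n, Jop c1 c2 u n - z * u n = f n)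
  /\ (forall u, Jdom c1 c2 u -> (forall n, Jop c1 c2 u n - z * u n = 0) -> forall n, u n = 0)
  /\ (exists C : R, forall u, Jdom c1 c2 u ->
        l2norm2 u <= C * l2norm2 (fun n => Jop c1 c2 u n - z * u n)).

Definition in_spectrum (c1 c2 z : R) : Prop := ~ in_resolvent c1 c2 z.

(* Let F_z be the quadratic form of J - z on finitely supported vectors. The z with F_z >= 0
   form a half-line (-oo, m]. It contains 0: since |c_n| + |c_(n+1)| = 1, a telescoping estimate
   gives F_0 >= 0. It omits 1/2: take a vector with alternating signs, entries r^k at the even
   places and, at the odd places, the values minimizing F_(1/2); its form is at most
   5 - ((|c1| - |c2|)/2)^2 times a weighted harmonic sum that is unbounded as r -> 1.
   Finally m lies in the spectrum: if J - m had a bounded inverse, Cauchy-Schwarz for F_m applied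
   to u and a truncation of (J - m)^(-1) u would give F_m(u) >= eta |u|^2, i.e. F_(m + eta) >= 0.
   The truncation error is small because n |x_n x_(n+1)| has lim inf 0 for x in l^2. *)

From Stdlib Require Import Reals Lra Lia Classical.
From Coquelicot Require Import Coquelicot.
Open Scope R_scope.

(** * Finite sums and finitely supported sequences *)

(* [sumR f n] is f 0 + ... + f (n - 1); unlike Coquelicot's [sum_n] it has an empty sum. *)
Fixpoint sumR (f : nat -> R) (n : nat) : R :=
  match n with O => 0 | S m => sumR f m + f m end.

Lemma sumR_ext f g n : (forall i, (i < n)%nat -> f i = g i) -> sumR f n = sumR g n.
Proof.
  induction n as [|n IH]; intros Hfg; simpl; [reflexivity|].
  rewrite IH, Hfg; auto with arith.
Qed.

Lemma sumR_plus f g n : sumR (fun i => f i + g i) n = sumR f n + sumR g n.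
Proof. induction n as [|n IH]; simpl; [ring | rewrite IH; ring]. Qed.

Lemma sumR_scal c f n : sumR (fun i => c * f i) n = c * sumR f n.
Proof. induction n as [|n IH]; simpl; [ring | rewrite IH; ring]. Qed.

Lemma sumR_le f g n : (forall i, (i < n)%nat -> f i <= g i) -> sumR f n <= sumR g n.
Proof.
  induction n as [|n IH]; intros Hfg; simpl; [lra|].
  apply Rplus_le_compat; auto with arith.
Qed.

Lemma sumR_nonneg f n : (forall i, (i < n)%nat -> 0 <= f i) -> 0 <= sumR f n.
Proof.
  intros Hf. induction n as [|n IH]; simpl; [lra|].
  apply Rplus_le_le_0_compat; auto with arith.
Qed.

Lemma sumR_add f n m : sumR f (n + m) = sumR f n + sumR (fun k => f (n + k)%nat) m.
Proof.
  induction m as [|m IH]; simpl; [rewrite Nat.add_0_r; ring|].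
  rewrite Nat.add_succ_r; simpl; rewrite IH; ring.
Qed.

Lemma sumR_le_add f n m : (forall k, 0 <= f k) -> sumR f n <= sumR f (n + m).
Proof.
  intros Hf. rewrite sumR_add.
  assert (0 <= sumR (fun k => f (n + k)%nat) m) by (apply sumR_nonneg; auto). lra.
Qed.

Lemma sumR_vanish f n m : (forall i, (n <= i)%nat -> f i = 0) -> (n <= m)%nat ->
  sumR f m = sumR f n.
Proof.
  intros Hf Hnm. replace m with (n + (m - n))%nat by lia. rewrite sumR_add.
  rewrite (sumR_ext (fun k => f (n + k)%nat) (fun _ => 0)) by (intros; apply Hf; lia).
  enough (sumR (fun _ => 0) (m - n) = 0) by lra.
  generalize (m - n)%nat; intros k; induction k; simpl; lra.
Qed.

Lemma sumR_double f K : sumR f (2 * K) = sumR (fun k => f (2 * k)%nat + f (S (2 * k))) K.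
Proof.
  induction K as [|K IH]; [reflexivity|].
  replace (2 * S K)%nat with (S (S (2 * K))) by lia. cbn [sumR]. rewrite IH. ring.
Qed.

Lemma sum_n_sumR a m : sum_n a m = sumR a (S m).
Proof.
  induction m as [|m IH]; [rewrite sum_O; simpl; now rewrite Rplus_0_l|].
  rewrite sum_Sn, IH. reflexivity.
Qed.

Definition supported (n : nat) (u : nat -> R) := forall i, (n <= i)%nat -> u i = 0.

Definition trunc (n : nat) (x : nat -> R) (i : nat) : R := if (i <? n)%nat then x i else 0.

Lemma trunc_lt n x i : (i < n)%nat -> trunc n x i = x i.
Proof. intros H. unfold trunc. destruct (Nat.ltb_spec i n); [reflexivity | lia]. Qed.

Lemma trunc_supported n x : supported n (trunc n x).
Proof. intros i H. unfold trunc. destruct (Nat.ltb_spec i n); [lia | reflexivity]. Qed.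

Lemma is_series_supported a n : supported n a -> is_series a (sumR a n).
Proof.
  intros Ha. enough (H : is_lim_seq (sum_n a) (sumR a n)) by exact H.
  apply (is_lim_seq_ext_loc (fun _ => sumR a n)); [|apply is_lim_seq_const].
  exists n. intros m Hm. rewrite sum_n_sumR. symmetry. apply sumR_vanish; [exact Ha | lia].
Qed.

Lemma sumR_le_Series a n : (forall k, 0 <= a k) -> ex_series a -> sumR a n <= Series a.
Proof.
  intros Ha Hs.
  rewrite (sumR_ext a (trunc n a)) by (intros; rewrite trunc_lt; auto).
  rewrite <- (is_series_unique _ _ (is_series_supported _ n (trunc_supported n a))).
  apply Series_le; [|exact Hs].
  intros k. unfold trunc. destruct (k <? n)%nat; split; auto; lra.
Qed.

Lemma supported_square n u : supported n u -> supported n (fun k => u k ^ 2).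
Proof. intros Hu i Hi. rewrite Hu by exact Hi. ring. Qed.

Lemma l2_supported n u : supported n u -> l2 u.
Proof. intros Hu. eexists. apply is_series_supported, supported_square, Hu. Qed.

Lemma l2norm2_supported n u : supported n u -> l2norm2 u = sumR (fun k => u k ^ 2) n.
Proof. intros Hu. apply is_series_unique, is_series_supported, supported_square, Hu. Qed.

Lemma exp_harmonic M : INR M + 1 <= exp (sumR (fun k => / (INR k + 1)) M).
Proof.
  induction M as [|M IH]; simpl sumR; [rewrite exp_0; simpl; lra|].
  rewrite exp_plus, S_INR. pose proof (pos_INR M).
  apply Rle_trans with ((INR M + 1) * (1 + / (INR M + 1))); [right; field; lra|].
  apply Rmult_le_compat; [lra | pose proof (Rinv_0_lt_compat (INR M + 1)); lra | exact IH |].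
  apply exp_ineq1_le.
Qed.

Lemma harmonic_unbounded X : exists M, X <= sumR (fun k => / (INR k + 1)) M.
Proof.
  destruct (INR_unbounded (exp X)) as [M HM]. exists M.
  pose proof (exp_harmonic M).
  destruct (Rle_or_lt X (sumR (fun k => / (INR k + 1)) M)) as [Hle|Hlt]; [exact Hle|].
  apply exp_increasing in Hlt. lra.
Qed.

Lemma pow_one_minus_lower s n : 0 <= s <= 1 -> 1 - INR n * s <= (1 - s) ^ n.
Proof.
  intros Hs. induction n as [|n IH]; [simpl; lra|]. rewrite S_INR; simpl.
  assert (0 <= INR n * s) by (apply Rmult_le_pos; [apply pos_INR | lra]).
  assert ((1 - s) * (1 - INR n * s) <= (1 - s) * (1 - s) ^ n)
    by (apply Rmult_le_compat_l; lra).
  nra.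
Qed.

Lemma pow_one_minus_mul_le s n : 0 <= s <= 1 -> (1 - s) ^ n * (1 + INR n * s) <= 1.
Proof.
  intros Hs. induction n as [|n IH]; [simpl; lra|]. rewrite S_INR; simpl.
  assert (0 <= (1 - s) ^ n) by (apply pow_le; lra).
  assert (0 <= (1 - s) ^ n * (s * s * (INR n + 1))).
  { apply Rmult_le_pos; [lra|]. pose proof (pos_INR n). nra. }
  nra.
Qed.

(** * The quadratic form of J - z *)

Section QuadraticForm.
Variables c1 c2 : R.
Notation lam := (lam c1 c2).
Notation J := (Jop c1 c2).

(* For u and v supported in [0, n) this is <(J - z) u, v>, by [jform_green]. *)
Definition jform (z : R) (n : nat) (u v : nat -> R) : R :=
  sumR (fun i => (INR (S i) - z) * u i * v i + lam i * (u i * v (S i) + u (S i) * v i)) n.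

Lemma jform_sym z n u v : jform z n u v = jform z n v u.
Proof. apply sumR_ext; intros; ring. Qed.

Lemma jform_quad z n u v t :
  jform z n (fun k => u k + t * v k) (fun k => u k + t * v k) =
  jform z n u u + 2 * t * jform z n u v + t ^ 2 * jform z n v v.
Proof.
  unfold jform. rewrite <- !sumR_scal, <- !sumR_plus. apply sumR_ext; intros; ring.
Qed.

Lemma jform_shift z z' n u :
  jform z' n u u = jform z n u u + (z - z') * sumR (fun i => u i ^ 2) n.
Proof. unfold jform. rewrite <- sumR_scal, <- sumR_plus. apply sumR_ext; intros; ring. Qed.

Lemma jform_supported z n m u v : supported n u -> supported n v -> (n <= m)%nat ->
  jform z m u v = jform z n u v.
Proof.
  intros Hu Hv Hnm. apply sumR_vanish; [|exact Hnm].
  intros i Hi. rewrite Hu, Hv, (Hu (S i)), (Hv (S i)) by lia. ring.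
Qed.

Lemma jform_green z N u v :
  sumR (fun i => (J u i - z * u i) * v i) (S N) = jform z (S N) u v - lam N * u N * v (S N).
Proof.
  unfold jform. induction N as [|N IH].
  - simpl. ring.
  - cbn [sumR] in *. rewrite IH. cbn [Jop]. ring.
Qed.

Lemma Jop_trunc x n i : (S i < n)%nat -> J (trunc n x) i = J x i.
Proof. intros H. destruct i; simpl; rewrite !trunc_lt by lia; reflexivity. Qed.

Lemma Jop_trunc_last x N : J (trunc (S N) x) N = J x N - lam N * x (S N).
Proof.
  assert (Hout : trunc (S N) x (S N) = 0) by (apply trunc_supported; lia).
  destruct N; simpl; rewrite ?trunc_lt, Hout by lia; ring.
Qed.

Lemma jform_trunc z N x :
  jform z (S N) (trunc (S N) x) (trunc (S N) x) =
  sumR (fun i => (J x i - z * x i) * x i) (S N) - lam N * x N * x (S N).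
Proof.
  pose proof (jform_green z N (trunc (S N) x) (trunc (S N) x)) as Hgreen.
  rewrite (trunc_supported (S N) x (S N)), Rmult_0_r, Rminus_0_r in Hgreen by lia.
  rewrite <- Hgreen. cbn [sumR].
  rewrite Jop_trunc_last, (sumR_ext _ (fun i => (J x i - z * x i) * x i)).
  - rewrite !trunc_lt by lia. ring.
  - intros i Hi. rewrite Jop_trunc, !trunc_lt by lia. reflexivity.
Qed.

Lemma jform_trunc_cross z n N x u : supported n u -> (n <= N)%nat ->
  jform z (S N) u (trunc (S N) x) = sumR (fun i => (J x i - z * x i) * u i) n.
Proof.
  intros Hu HnN. rewrite jform_sym.
  pose proof (jform_green z N (trunc (S N) x) u) as Hgreen.
  rewrite (Hu (S N)), Rmult_0_r, Rminus_0_r in Hgreen by lia.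
  rewrite <- Hgreen, (sumR_vanish _ n (S N)); [| intros i Hi; rewrite Hu by lia; ring | lia].
  apply sumR_ext. intros i Hi. rewrite Jop_trunc, trunc_lt by lia. reflexivity.
Qed.

End QuadraticForm.

Lemma two_Rabs_mul_le x y : 2 * Rabs (x * y) <= x ^ 2 + y ^ 2.
Proof.
  rewrite Rabs_mult, <- (pow2_abs x), <- (pow2_abs y).
  pose proof (pow2_ge_0 (Rabs x - Rabs y)). nra.
Qed.

Lemma Rabs_cross_le c x y : - (2 * c * x * y) <= Rabs c * (x ^ 2 + y ^ 2).
Proof.
  pose proof (Rabs_maj2 (c * (x * y))) as Hc. rewrite Rabs_mult in Hc.
  assert (Rabs c * (2 * Rabs (x * y)) <= Rabs c * (x ^ 2 + y ^ 2))
    by (apply Rmult_le_compat_l; [apply Rabs_pos | apply two_Rabs_mul_le]).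
  lra.
Qed.

Section Positivity.
Variables c1 c2 : R.
Hypothesis hs : Rabs c1 + Rabs c2 = 1.

Lemma cseq_abs_succ i : Rabs (cseq c1 c2 (S i)) = 1 - Rabs (cseq c1 c2 i).
Proof. unfold cseq. rewrite Nat.even_succ, <- Nat.negb_even. destruct (Nat.even i); simpl; lra. Qed.

Lemma cseq_abs_le1 i : Rabs (cseq c1 c2 i) <= 1.
Proof.
  unfold cseq. pose proof (Rabs_pos c1); pose proof (Rabs_pos c2). destruct (Nat.even i); lra.
Qed.

Lemma lam_abs_le i : Rabs (lam c1 c2 i) <= INR (S i).
Proof.
  unfold lam. rewrite Rabs_mult, (Rabs_right (INR (S i))) by (apply Rle_ge, pos_INR).
  pose proof (cseq_abs_le1 i). pose proof (pos_INR (S i)). nra.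
Qed.

(* The bound telescopes because |c_N| + |c_(N+1)| = 1. *)
Lemma jform0_lower N u :
  - ((1 - Rabs (cseq c1 c2 N)) * INR N * u N ^ 2) <= jform c1 c2 0 N u u.
Proof.
  induction N as [|N IH]; [unfold jform; simpl; lra|].
  unfold jform in *; cbn [sumR]. rewrite cseq_abs_succ.
  pose proof (cseq_abs_le1 N).
  set (c := cseq c1 c2 N) in *. change (lam c1 c2 N) with (c * INR (S N)).
  set (x := u N) in *. set (y := u (S N)).
  pose proof (Rabs_cross_le c x y).
  pose proof (pos_INR (S N)). pose proof (pow2_ge_0 x).
  assert (0 <= INR (S N) * (Rabs c * (x ^ 2 + y ^ 2) + 2 * c * x * y))
    by (apply Rmult_le_pos; lra).
  assert (0 <= (1 - Rabs c) * x ^ 2) by (apply Rmult_le_pos; lra).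
  rewrite S_INR in *. nra.
Qed.

Lemma jform0_nonneg n u : supported n u -> 0 <= jform c1 c2 0 n u u.
Proof. intros Hu. pose proof (jform0_lower n u) as Hl. rewrite (Hu n) in Hl by lia. lra. Qed.

End Positivity.

(** * The bottom of the spectrum *)

Lemma sumR_cross_le_Series x L : l2 x ->
  sumR (fun k => Rabs (x k * x (S k))) L <= Series (fun k => x k ^ 2).
Proof.
  intros Hx. set (a := fun k => x k ^ 2).
  assert (Ha : forall k, 0 <= a k) by (intros; apply pow2_ge_0).
  apply Rle_trans with (sumR (fun k => / 2 * (a k + a (1 + k)%nat)) L).
  - apply sumR_le. intros k _. pose proof (two_Rabs_mul_le (x k) (x (S k))). unfold a. simpl. lra.
  - rewrite sumR_scal, sumR_plus.
    pose proof (sumR_le_Series a L Ha Hx). pose proof (sumR_le_Series a (1 + L) Ha Hx) as H1L.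
    rewrite sumR_add in H1L. assert (0 <= sumR a 1) by (simpl; specialize (Ha O); lra). lra.
Qed.

(* Otherwise |x_N x_(N+1)| >= eps / (N + 1) eventually, and the harmonic series would bound
   the convergent series of the x_N^2. *)
Lemma l2_liminf_cross x : l2 x -> forall eps n0, 0 < eps ->
  exists N, (n0 <= N)%nat /\ INR (S N) * Rabs (x N * x (S N)) < eps.
Proof.
  intros Hx eps n0 Heps. apply NNPP. intros Hno. pose proof (pos_INR n0).
  set (c := eps / (INR n0 + 1)). assert (Hc : 0 < c) by (apply Rdiv_lt_0_compat; lra).
  assert (Hterm : forall k, c * / (INR k + 1) <= Rabs (x (n0 + k)%nat * x (S (n0 + k)))).
  { intros k. pose proof (pos_INR k). set (p := Rabs (x (n0 + k)%nat * x (S (n0 + k)))).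
    assert (Hk : eps <= INR (S (n0 + k)) * p)
      by (apply Rnot_lt_le; intros Hlt; apply Hno; exists (n0 + k)%nat; split; [lia | exact Hlt]).
    rewrite S_INR, plus_INR in Hk.
    assert (0 <= INR n0 * INR k * p) by (repeat apply Rmult_le_pos; try lra; apply Rabs_pos).
    unfold c. replace (eps / (INR n0 + 1) * / (INR k + 1)) with (eps / ((INR n0 + 1) * (INR k + 1)))
      by (field; lra).
    apply Rle_div_l; nra. }
  destruct (harmonic_unbounded (Series (fun k => x k ^ 2) / c + 1)) as [L HL].
  assert (Hsum : c * sumR (fun k => / (INR k + 1)) L <= Series (fun k => x k ^ 2)).
  { rewrite <- sumR_scal. eapply Rle_trans; [apply sumR_le; intros k _; apply Hterm|].
    eapply Rle_trans; [|apply (sumR_cross_le_Series x (n0 + L) Hx)].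
    rewrite sumR_add. assert (0 <= sumR (fun k => Rabs (x k * x (S k))) n0)
      by (apply sumR_nonneg; intros; apply Rabs_pos).
    lra. }
  apply Rmult_le_compat_l with (r := c) in HL; [|lra].
  replace (c * (Series (fun k => x k ^ 2) / c + 1)) with (Series (fun k => x k ^ 2) + c) in HL
    by (field; lra).
  lra.
Qed.

Lemma quad_nonneg_discr a b c : 0 <= c ->
  (forall t, 0 <= a + 2 * t * b + t ^ 2 * c) -> b ^ 2 <= a * c.
Proof.
  intros Hc Hq. destruct (Rle_lt_or_eq_dec 0 c Hc) as [Hpos|Hzero].
  - specialize (Hq (- b / c)).
    replace (a + 2 * (- b / c) * b + (- b / c) ^ 2 * c) with ((a * c - b ^ 2) / c) in Hq
      by (field; lra).
    apply Rmult_le_compat_r with (r := c) in Hq; [|lra].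
    unfold Rdiv in Hq. rewrite Rmult_assoc, Rinv_l, Rmult_1_r in Hq; lra.
  - subst c. destruct (Req_dec b 0) as [Hb|Hb]; [subst; lra|].
    specialize (Hq (- (a + 1) / (2 * b))).
    replace (a + 2 * (- (a + 1) / (2 * b)) * b + (- (a + 1) / (2 * b)) ^ 2 * 0) with (-1) in Hq
      by (field; exact Hb).
    lra.
Qed.

Lemma sqr_le_mul_eps U F K : 0 <= U -> 0 <= F -> 0 < K ->
  (forall eps, 0 < eps -> U ^ 2 <= F * (K * U + eps)) -> U <= F * K.
Proof.
  intros HU HF HK Hle.
  assert (Hsq : U ^ 2 <= F * K * U).
  { apply Rle_plus_epsilon. intros eps Heps.
    specialize (Hle (eps / (F + 1)) ltac:(apply Rdiv_lt_0_compat; lra)).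
    assert (F * (eps / (F + 1)) <= eps).
    { replace (F * (eps / (F + 1))) with (F * eps / (F + 1)) by (field; lra).
      apply Rle_div_l; nra. }
    nra. }
  destruct (Rle_lt_or_eq_dec 0 U HU) as [Hpos|<-]; [|nra].
  apply Rmult_le_reg_r with U; [exact Hpos|]. nra.
Qed.

Section Spectrum.
Variables c1 c2 : R.
Hypothesis hs : Rabs c1 + Rabs c2 = 1.
Notation J := (Jop c1 c2).

Definition form_nonneg (z : R) : Prop :=
  forall n u, supported n u -> 0 <= jform c1 c2 z n u u.


Lemma jform_trunc_preimage_le z n N u x : supported n u -> (n <= N)%nat ->
  (forall i, J x i - z * x i = u i) ->
  jform c1 c2 z (S N) (trunc (S N) x) (trunc (S N) x) <=
  (sumR (fun i => u i ^ 2) n + sumR (fun i => x i ^ 2) (S N)) / 2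
  + INR (S N) * Rabs (x N * x (S N)).
Proof.
  intros Hu HnN Hx.
  rewrite jform_trunc, (sumR_ext _ (fun i => u i * x i)) by (intros; rewrite Hx; ring).
  replace (sumR (fun i => u i ^ 2) n) with (sumR (fun i => u i ^ 2) (S N))
    by (apply sumR_vanish; [intros i Hi; rewrite Hu by lia; ring | lia]).
  assert (Hpair : sumR (fun i => u i * x i) (S N) <=
                  sumR (fun i => / 2 * (u i ^ 2 + x i ^ 2)) (S N)).
  { apply sumR_le. intros i _. pose proof (pow2_ge_0 (u i - x i)). nra. }
  rewrite sumR_scal, sumR_plus in Hpair.
  assert (Hlast : - (lam c1 c2 N * x N * x (S N)) <= INR (S N) * Rabs (x N * x (S N))).
  { pose proof (Rabs_maj2 (lam c1 c2 N * (x N * x (S N)))) as Hmaj. rewrite Rabs_mult in Hmaj.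
    pose proof (lam_abs_le c1 c2 hs N). pose proof (Rabs_pos (x N * x (S N))). nra. }
  lra.
Qed.

(* Cauchy-Schwarz for the nonnegative form, applied to u and the truncated preimage of u. *)
Lemma preimage_form_bound z n N u x : form_nonneg z -> supported n u -> (n <= N)%nat ->
  (forall i, J x i - z * x i = u i) ->
  sumR (fun i => u i ^ 2) n ^ 2 <=
  jform c1 c2 z n u u * ((sumR (fun i => u i ^ 2) n + sumR (fun i => x i ^ 2) (S N)) / 2
                         + INR (S N) * Rabs (x N * x (S N))).
Proof.
  intros Hnn Hu HnN Hx. set (xN := trunc (S N) x).
  assert (Hcross : jform c1 c2 z (S N) u xN = sumR (fun i => u i ^ 2) n).
  { unfold xN. rewrite (jform_trunc_cross c1 c2 z n) by assumption. apply sumR_ext. intros i _.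
    rewrite Hx. ring. }
  assert (HF : jform c1 c2 z (S N) u u = jform c1 c2 z n u u)
    by (apply jform_supported; [exact Hu | exact Hu | lia]).
  assert (Hdiscr : sumR (fun i => u i ^ 2) n ^ 2 <=
                   jform c1 c2 z n u u * jform c1 c2 z (S N) xN xN).
  { rewrite <- Hcross, <- HF. apply quad_nonneg_discr; [apply Hnn, trunc_supported|]. intros t.
    rewrite <- jform_quad. apply Hnn.
    intros i Hi. rewrite Hu, (trunc_supported (S N) x) by lia. ring. }
  eapply Rle_trans; [exact Hdiscr|]. apply Rmult_le_compat_l; [apply Hnn, Hu|].
  apply jform_trunc_preimage_le; assumption.
Qed.

Lemma resolvent_form_gap z : form_nonneg z -> in_resolvent c1 c2 z ->
  exists eta, 0 < eta /\ form_nonneg (z + eta).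
Proof.
  intros Hnn [Hsurj [_ [C HC]]]. pose proof (Rabs_pos C).
  exists (2 / (1 + Rabs C)). split; [apply Rdiv_lt_0_compat; lra|].
  intros n u Hu. rewrite (jform_shift c1 c2 z).
  set (U := sumR (fun i => u i ^ 2) n). set (F := jform c1 c2 z n u u).
  assert (HU : 0 <= U) by (apply sumR_nonneg; intros; apply pow2_ge_0).
  assert (HF : 0 <= F) by (apply Hnn, Hu).
  destruct (Hsurj u (l2_supported n u Hu)) as [x [[Hx HJx] Hpre]].
  assert (Hnorm : forall N, sumR (fun i => x i ^ 2) N <= Rabs C * U).
  { intros N. eapply Rle_trans; [apply sumR_le_Series; [intros; apply pow2_ge_0 | exact Hx]|].
    specialize (HC x (conj Hx HJx)).
    replace (l2norm2 (fun i => J x i - z * x i)) with (l2norm2 u) in HC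
      by (apply Series_ext; intros; rewrite Hpre; reflexivity).
    rewrite (l2norm2_supported n u Hu) in HC. fold U in HC. unfold l2norm2 in HC.
    pose proof (Rle_abs C). nra. }
  assert (HUF : U <= F * ((1 + Rabs C) / 2)).
  { apply sqr_le_mul_eps; [exact HU | exact HF | lra|]. intros eps Heps.
    destruct (l2_liminf_cross x Hx eps n Heps) as [N [HnN HN]].
    eapply Rle_trans; [apply (preimage_form_bound z n N u x Hnn Hu HnN Hpre)|].
    apply Rmult_le_compat_l; [exact HF|]. specialize (Hnorm (S N)). fold U. lra. }
  apply Rmult_le_compat_r with (r := 2 / (1 + Rabs C)) in HUF;
    [| apply Rlt_le, Rdiv_lt_0_compat; lra].
  replace (F * ((1 + Rabs C) / 2) * (2 / (1 + Rabs C))) with F in HUF by (field; lra).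
  lra.
Qed.

Lemma form_nonneg_antitone z z' : z' <= z -> form_nonneg z -> form_nonneg z'.
Proof.
  intros Hz Hnn n u Hu. rewrite (jform_shift c1 c2 z).
  pose proof (Hnn n u Hu). assert (0 <= sumR (fun i => u i ^ 2) n)
    by (apply sumR_nonneg; intros; apply pow2_ge_0).
  nra.
Qed.

Lemma form_nonneg_closed m : (forall z, z < m -> form_nonneg z) -> form_nonneg m.
Proof.
  intros Hbelow n u Hu. set (U := sumR (fun i => u i ^ 2) n).
  assert (HU : 0 <= U) by (apply sumR_nonneg; intros; apply pow2_ge_0).
  apply Rle_plus_epsilon. intros eps Heps.
  assert (Hd : 0 < eps / (U + 1)) by (apply Rdiv_lt_0_compat; lra).
  pose proof (Hbelow (m - eps / (U + 1)) ltac:(lra) n u Hu) as H.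
  rewrite (jform_shift c1 c2 m) in H. fold U in H.
  replace (m - (m - eps / (U + 1))) with (eps / (U + 1)) in H by ring.
  assert (eps / (U + 1) * U <= eps).
  { replace (eps / (U + 1) * U) with (eps * U / (U + 1)) by (field; lra).
    apply Rle_div_l; nra. }
  lra.
Qed.

(* The bottom of the spectrum is the supremum of the z with a nonnegative form. *)
Lemma spectrum_below z0 : (exists n v, supported n v /\ jform c1 c2 z0 n v v < 0) ->
  exists z, z < z0 /\ in_spectrum c1 c2 z.
Proof.
  intros [n [v [Hv Hneg]]].
  assert (Hz0 : ~ form_nonneg z0) by (intros Hnn; specialize (Hnn n v Hv); lra).
  assert (Hbound : forall z, form_nonneg z -> z < z0).
  { intros z Hz. apply Rnot_le_lt. intros Hle. exact (Hz0 (form_nonneg_antitone z z0 Hle Hz)). }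
  destruct (completeness form_nonneg) as [m [Hub Hlub]].
  - exists z0. intros z Hz. left. apply Hbound, Hz.
  - exists 0. intros k u Hu. apply jform0_nonneg; assumption.
  - assert (Hm : form_nonneg m).
    { apply form_nonneg_closed. intros z Hz.
      destruct (classic (exists w, form_nonneg w /\ z < w)) as [[w [Hw Hzw]]|Hno].
      - apply (form_nonneg_antitone w); [lra | exact Hw].
      - exfalso. assert (m <= z); [|lra]. apply Hlub. intros w Hw.
        apply Rnot_lt_le. intros Hzw. apply Hno. exists w. split; assumption. }
    exists m. split; [apply Hbound, Hm|].
    intros Hres. destruct (resolvent_form_gap m Hm Hres) as [eta [Heta Hmeta]].
    pose proof (Hub (m + eta) Hmeta). lra.
Qed.

End Spectrum.

(** * A trial vector with negative form *)

Definition sgn (a : R) : R := if Rle_dec 0 a then 1 else -1.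

Fixpoint sign_chain (a : nat -> R) (i : nat) : R :=
  match i with O => 1 | S j => - sgn (a j) * sign_chain a j end.

Lemma sign_chain_sqr a i : sign_chain a i ^ 2 = 1.
Proof.
  induction i as [|i IH]; simpl in *; [ring|].
  unfold sgn; destruct (Rle_dec 0 (a i)); nra.
Qed.

Lemma sign_chain_step a i : a i * sign_chain a i * sign_chain a (S i) = - Rabs (a i).
Proof.
  pose proof (sign_chain_sqr a i) as Hsq. simpl sign_chain. unfold sgn.
  destruct (Rle_dec 0 (a i)); [rewrite Rabs_right by lra | rewrite Rabs_left by lra]; nra.
Qed.

Lemma INR_succ_double k : INR (S (2 * k)) = 2 * INR k + 1.
Proof. rewrite S_INR, mult_INR. reflexivity. Qed.

Lemma INR_double_succ k : INR (2 * S k) = 2 * INR k + 2.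
Proof. rewrite mult_INR, (S_INR k). change (INR 2) with 2. ring. Qed.

Lemma even_succ_double k : Nat.even (S (2 * k)) = false.
Proof. rewrite Nat.even_succ, <- Nat.negb_even, Nat.even_even. reflexivity. Qed.

Section TrialVector.
Variables c1 c2 : R.
Notation lam := (lam c1 c2).

Lemma jform_sign_chain z n w :
  jform c1 c2 z n (fun i => sign_chain lam i * w i) (fun i => sign_chain lam i * w i) =
  sumR (fun i => (INR (S i) - z) * w i ^ 2 - 2 * Rabs (lam i) * w i * w (S i)) n.
Proof.
  apply sumR_ext. intros i _.
  transitivity ((INR (S i) - z) * w i ^ 2 * sign_chain lam i ^ 2
                + 2 * (lam i * sign_chain lam i * sign_chain lam (S i)) * w i * w (S i)); [ring|].
  rewrite sign_chain_sqr, sign_chain_step. ring.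
Qed.

Definition odd_weight (k : nat) : R := 2 * INR k + 3 / 2.

Definition coupling (x : nat -> R) (k : nat) : R :=
  Rabs (lam (2 * k)) * x k + Rabs (lam (S (2 * k))) * x (S k).

(* Even entries are x; each odd entry minimizes the form given its two even neighbours. *)
Definition interleave (x : nat -> R) (i : nat) : R :=
  if Nat.even i then x (Nat.div2 i) else coupling x (Nat.div2 i) / odd_weight (Nat.div2 i).

Lemma odd_weight_pos k : 0 < odd_weight k.
Proof. unfold odd_weight. pose proof (pos_INR k). lra. Qed.

Lemma interleave_form x K :
  sumR (fun i => (INR (S i) - 1 / 2) * interleave x i ^ 2
                 - 2 * Rabs (lam i) * interleave x i * interleave x (S i)) (2 * K) =
  sumR (fun k => (2 * INR k + 1 / 2) * x k ^ 2 - coupling x k ^ 2 / odd_weight k) K.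
Proof.
  rewrite sumR_double. apply sumR_ext. intros k _. unfold interleave.
  replace (S (S (2 * k))) with (2 * S k)%nat by lia.
  rewrite !Nat.even_even, even_succ_double, !Nat.div2_double, Nat.div2_succ_double.
  pose proof (odd_weight_pos k). unfold coupling, odd_weight in *.
  rewrite INR_succ_double, INR_double_succ. field. lra.
Qed.

Lemma interleave_supported K x : supported K x -> supported (2 * K) (interleave x).
Proof.
  intros Hx i Hi. assert (HK : (K <= Nat.div2 i)%nat) by (apply Nat.div2_le_lower_bound; lia).
  unfold interleave, coupling. rewrite !Hx by lia.
  destruct (Nat.even i); [reflexivity | unfold Rdiv; ring].
Qed.

End TrialVector.

Lemma pair_term_le A B r k : A + B = 1 -> 0 <= B <= 1 -> r <= 1 -> 0 <= k ->
  (2 * k + 1 / 2) - (A * (2 * k + 1) + B * (2 * k + 2) * r) ^ 2 / (2 * k + 3 / 2)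
  <= - 2 * B + 4 * B * (k + 1) * (1 - r) + 2 * (1 - r) - ((A - B) / 2) ^ 2 / (2 * k + 3 / 2).
Proof.
  intros HAB HB Hr Hk. set (m := 2 * k + 3 / 2). set (d := (A - B) / 2).
  set (e := 2 * B * (k + 1) * (1 - r)).
  assert (Hm : 0 < m) by (unfold m; lra).
  assert (He : 0 <= e <= 2 * (k + 1) * (1 - r)).
  { unfold e. assert (0 <= (k + 1) * (1 - r)) by (apply Rmult_le_pos; lra). nra. }
  (* the coupling equals m - d - e, so expanding its square leaves -(d + e)^2 / m *)
  assert (Hcoup : A * (2 * k + 1) + B * (2 * k + 2) * r = m - d - e)
    by (unfold m, d, e; replace A with (1 - B) by lra; field).
  rewrite Hcoup.
  replace ((2 * k + 1 / 2) - (m - d - e) ^ 2 / m) with (- 2 * B + 2 * e - (d + e) ^ 2 / m)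
    by (unfold m, d; replace A with (1 - B) by lra; field; lra).
  assert (Hde : d ^ 2 - (d + e) ^ 2 <= 2 * (1 - r) * m).
  { assert (-1 / 2 <= d <= 1 / 2) by (unfold d; lra). unfold m in *. nra. }
  assert (d ^ 2 / m - (d + e) ^ 2 / m <= 2 * (1 - r))
    by (unfold Rdiv; rewrite <- Rmult_minus_distr_r; apply Rle_div_l; lra).
  unfold e in *. lra.
Qed.

Lemma pow_sqr_comm r k : (r ^ k) ^ 2 = (r ^ 2) ^ k.
Proof. rewrite <- !pow_mult, Nat.mul_comm. reflexivity. Qed.

Lemma geometric_sum q K : sumR (pow q) K * (1 - q) = 1 - q ^ K.
Proof. induction K as [|K IH]; simpl; [ring|]. rewrite Rmult_plus_distr_r, IH. ring. Qed.

Lemma succ_geometric_sum q K :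
  sumR (fun k => (INR k + 1) * q ^ k) K * (1 - q) = sumR (pow q) K - INR K * q ^ K.
Proof.
  induction K as [|K IH]; [simpl; ring|].
  cbn [sumR]. rewrite Rmult_plus_distr_r, IH, S_INR. simpl. ring.
Qed.

(* The two large sums -2B sum q^k and 4B(1-r) sum (k+1) q^k, of order B/(1-r), cancel. *)
Lemma weighted_geometric_sum_le B r K : 0 <= B <= 1 -> 0 < r < 1 ->
  sumR (fun k => (r ^ 2) ^ k * (- 2 * B + 4 * B * (INR k + 1) * (1 - r) + 2 * (1 - r))) K <= 4.
Proof.
  intros HB Hr. set (s := 1 - r). set (t := 2 - s). set (q := r ^ 2).
  assert (Hq : 0 <= q <= 1) by (unfold q; nra).
  assert (HqK : 0 <= q ^ K) by (apply pow_le; lra).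
  assert (Hd : 1 - q = s * t) by (unfold t, s, q; ring).
  set (G0 := sumR (pow q) K). set (G1 := sumR (fun k => (INR k + 1) * q ^ k) K).
  assert (HG0 : s * t * G0 <= 1).
  { rewrite <- Hd, Rmult_comm. unfold G0. rewrite geometric_sum. lra. }
  assert (HG1 : s * t * G1 <= G0).
  { rewrite <- Hd, Rmult_comm. unfold G1. rewrite succ_geometric_sum. fold G0.
    pose proof (pos_INR K). nra. }
  assert (HG0pos : 0 <= G0) by (apply sumR_nonneg; intros; apply pow_le; lra).
  rewrite (sumR_ext _ (fun k => (- 2 * B + 2 * s) * q ^ k + 4 * B * s * ((INR k + 1) * q ^ k)))
    by (intros; unfold q, s; ring).
  rewrite sumR_plus, !sumR_scal. fold G0 G1.
  assert (Hts : 1 < t) by (unfold t, s; lra).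
  assert (H1 : 4 * B * s * G1 * t <= 4 * B * G0).
  { replace (4 * B * s * G1 * t) with (4 * B * (s * t * G1)) by ring.
    apply Rmult_le_compat_l; lra. }
  assert (H2 : ((- 2 * B + 2 * s) * G0 + 4 * B * s * G1) * t <= (4 - 2 * s + 2 * B) * (s * G0))
    by (unfold t in *; nra).
  assert (H3 : (4 - 2 * s + 2 * B) * (s * G0) * t <= 4 - 2 * s + 2 * B)
    by (assert (0 <= 4 - 2 * s + 2 * B) by (unfold s; lra); nra).
  assert (H4 : 4 - 2 * s + 2 * B <= 4 * t ^ 2) by (unfold t, s in *; nra).
  set (S := (- 2 * B + 2 * s) * G0 + 4 * B * s * G1) in *.
  assert (H5 : S * t * t <= (4 - 2 * s + 2 * B) * (s * G0) * t)
    by (apply Rmult_le_compat_r; lra).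
  apply Rmult_le_reg_r with (t ^ 2); [nra | lra].
Qed.

Lemma weighted_harmonic_ge q M : 0 <= q <= 1 -> 1 / 2 <= q ^ M ->
  / 4 * sumR (fun k => / (INR k + 1)) M <= sumR (fun k => q ^ k / odd_weight k) M.
Proof.
  intros Hq HqM. rewrite <- sumR_scal. apply sumR_le. intros k Hk.
  assert (Hqk : q ^ M <= q ^ k).
  { replace M with (k + (M - k))%nat by lia. rewrite pow_add.
    assert (q ^ (M - k) <= 1) by (rewrite <- (pow1 (M - k)); apply pow_incr; lra).
    pose proof (pow_le q k (proj1 Hq)). nra. }
  pose proof (pos_INR k). pose proof (odd_weight_pos k).
  assert (Hw : / (2 * (INR k + 1)) <= / odd_weight k)
    by (apply Rinv_le_contravar; [exact H0 | unfold odd_weight; lra]).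
  replace (/ 4 * / (INR k + 1)) with (/ 2 * / (2 * (INR k + 1))) by (field; lra).
  apply Rmult_le_compat; try lra. apply Rlt_le, Rinv_0_lt_compat. lra.
Qed.

Lemma pow_sqr_mul_decay r M : 0 < r < 1 ->
  exists K, (M <= K)%nat /\ (r ^ 2) ^ K * (2 * INR K + 1 / 2) <= 1.
Proof.
  intros Hr. set (s := 1 - r). assert (Hs : 0 < s <= 1) by (unfold s; lra).
  destruct (pow_lt_1_zero r ltac:(rewrite Rabs_right; lra) (s / 3) ltac:(lra)) as [N0 HN0].
  exists (Nat.max M N0). split; [lia|]. set (K := Nat.max M N0).
  set (p := r ^ K). assert (Hp : 0 <= p) by (apply pow_le; lra).
  assert (Hsmall : 3 * p < s).
  { specialize (HN0 K ltac:(lia)). rewrite Rabs_right in HN0 by (apply Rle_ge, pow_le; lra).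
    fold p in HN0. lra. }
  assert (HKp : INR K * p * s <= 1).
  { pose proof (pow_one_minus_mul_le s K ltac:(lra)) as Hb.
    replace (1 - s) with r in Hb by (unfold s; ring). fold p in Hb. nra. }
  rewrite <- pow_sqr_comm. fold p.
  assert (p * (INR K * p) * 3 <= 1) by (pose proof (pos_INR K); nra).
  nra.
Qed.

Section NegativeDirection.
Variables c1 c2 : R.
Hypothesis hs : Rabs c1 + Rabs c2 = 1.
Notation lam := (lam c1 c2).

Lemma lam_abs_even k : Rabs (lam (2 * k)) = Rabs c1 * (2 * INR k + 1).
Proof.
  unfold lam, cseq. rewrite Nat.even_even, Rabs_mult, INR_succ_double, (Rabs_right (2 * _ + 1));
    [reflexivity|]. pose proof (pos_INR k). lra.
Qed.

Lemma lam_abs_odd k : Rabs (lam (S (2 * k))) = Rabs c2 * (2 * INR k + 2).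
Proof.
  unfold lam, cseq. replace (S (S (2 * k))) with (2 * S k)%nat by lia.
  rewrite even_succ_double, Rabs_mult, INR_double_succ, (Rabs_right (2 * _ + 2));
    [reflexivity|]. pose proof (pos_INR k). lra.
Qed.

Definition trial (r : R) (K : nat) (i : nat) : R :=
  sign_chain lam i * interleave c1 c2 (trunc K (pow r)) i.

Lemma trial_supported r K : supported (2 * K) (trial r K).
Proof.
  intros i Hi. unfold trial.
  rewrite (interleave_supported c1 c2 K); [ring | apply trunc_supported | exact Hi].
Qed.

Lemma trial_term_le r K k : 0 < r < 1 -> (k < K)%nat ->
  (2 * INR k + 1 / 2) * trunc (S K) (pow r) k ^ 2
  - coupling c1 c2 (trunc (S K) (pow r)) k ^ 2 / odd_weight k <=
  (r ^ 2) ^ k * (- 2 * Rabs c2 + 4 * Rabs c2 * (INR k + 1) * (1 - r) + 2 * (1 - r)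
                 - ((Rabs c1 - Rabs c2) / 2) ^ 2 / odd_weight k).
Proof.
  intros Hr Hk.
  assert (HB : 0 <= Rabs c2 <= 1) by (pose proof (Rabs_pos c1); pose proof (Rabs_pos c2); lra).
  assert (Hc : coupling c1 c2 (trunc (S K) (pow r)) k
               = r ^ k * (Rabs c1 * (2 * INR k + 1) + Rabs c2 * (2 * INR k + 2) * r)).
  { unfold coupling. rewrite lam_abs_even, lam_abs_odd, !trunc_lt by lia. simpl. ring. }
  rewrite Hc, trunc_lt, Rpow_mult_distr, pow_sqr_comm by lia.
  pose proof (pos_INR k). pose proof (odd_weight_pos k).
  eapply Rle_trans;
    [| apply Rmult_le_compat_l;
       [apply pow_le, pow2_ge_0 | exact (pair_term_le _ _ r (INR k) hs HB ltac:(lra) ltac:(lra))]].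
  right. unfold odd_weight. field. lra.
Qed.

Lemma trial_form_le r K : 0 < r < 1 ->
  jform c1 c2 (1 / 2) (2 * S K) (trial r (S K)) (trial r (S K)) <=
  4 + (r ^ 2) ^ K * (2 * INR K + 1 / 2)
  - ((Rabs c1 - Rabs c2) / 2) ^ 2 * sumR (fun k => (r ^ 2) ^ k / odd_weight k) K.
Proof.
  intros Hr. unfold trial. rewrite jform_sign_chain, interleave_form. cbn [sumR].
  assert (Hlast : (2 * INR K + 1 / 2) * trunc (S K) (pow r) K ^ 2
                  - coupling c1 c2 (trunc (S K) (pow r)) K ^ 2 / odd_weight K
                  <= (r ^ 2) ^ K * (2 * INR K + 1 / 2)).
  { rewrite trunc_lt, pow_sqr_comm by lia.
    assert (0 <= coupling c1 c2 (trunc (S K) (pow r)) K ^ 2 / odd_weight K)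
      by (apply Rdiv_le_0_compat; [apply pow2_ge_0 | apply odd_weight_pos]).
    lra. }
  eapply Rle_trans;
    [apply Rplus_le_compat;
       [apply sumR_le; intros k Hk; apply (trial_term_le r K k Hr Hk) | exact Hlast]|].
  rewrite (sumR_ext _ (fun k => (r ^ 2) ^ k * (- 2 * Rabs c2 + 4 * Rabs c2 * (INR k + 1) * (1 - r)
                                              + 2 * (1 - r))
                               + - ((Rabs c1 - Rabs c2) / 2) ^ 2 * ((r ^ 2) ^ k / odd_weight k)))
    by (intros; unfold Rdiv; ring).
  rewrite sumR_plus, sumR_scal.
  assert (HB : 0 <= Rabs c2 <= 1) by (pose proof (Rabs_pos c1); pose proof (Rabs_pos c2); lra).
  pose proof (weighted_geometric_sum_le (Rabs c2) r K HB Hr). lra.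
Qed.

Lemma exists_negative_form : Rabs c1 <> Rabs c2 ->
  exists n v, supported n v /\ jform c1 c2 (1 / 2) n v v < 0.
Proof.
  (* M is chosen so that d^2 / 4 * H_M >= 6 outweighs the 4 + 1 of [trial_form_le]. *)
  intros hneq. set (d := (Rabs c1 - Rabs c2) / 2).
  assert (Hd0 : d <> 0) by (unfold d; lra).
  assert (Hd : 0 < d ^ 2) by (pose proof (Rlt_0_sqr d Hd0); unfold Rsqr in *; nra).
  destruct (harmonic_unbounded (24 / d ^ 2)) as [M HM].
  set (s := 1 / (4 * (INR M + 1))). pose proof (pos_INR M).
  assert (Hs : 0 < s <= 1 / 4)
    by (unfold s; split; [apply Rdiv_lt_0_compat | apply Rle_div_l]; lra).
  set (r := 1 - s). assert (Hr : 0 < r < 1) by (unfold r; lra).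
  assert (HqM : 1 / 2 <= (r ^ 2) ^ M).
  { rewrite <- pow_mult. pose proof (pow_one_minus_lower s (2 * M) ltac:(lra)) as Hb.
    rewrite mult_INR in Hb. change (INR 2) with 2 in Hb. fold r in Hb.
    assert (INR M * s <= 1 / 4).
    { replace (INR M * s) with (INR M / (4 * (INR M + 1))) by (unfold s; field; lra).
      apply Rle_div_l; lra. }
    lra. }
  destruct (pow_sqr_mul_decay r M Hr) as [K [HMK HK]].
  exists (2 * S K)%nat, (trial r (S K)). split; [apply trial_supported|].
  eapply Rle_lt_trans; [apply trial_form_le; exact Hr|]. fold d.
  assert (Hharm : / 4 * sumR (fun k => / (INR k + 1)) M
                  <= sumR (fun k => (r ^ 2) ^ k / odd_weight k) K).
  { eapply Rle_trans; [apply (weighted_harmonic_ge (r ^ 2)); [split; nra | exact HqM]|].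
    replace K with (M + (K - M))%nat by lia. apply sumR_le_add. intros k.
    apply Rdiv_le_0_compat; [apply pow_le, pow2_ge_0 | apply odd_weight_pos]. }
  assert (24 <= d ^ 2 * sumR (fun k => / (INR k + 1)) M).
  { apply Rmult_le_compat_l with (r := d ^ 2) in HM; [|lra].
    replace (d ^ 2 * (24 / d ^ 2)) with 24 in HM by (field; exact Hd0). exact HM. }
  nra.
Qed.

End NegativeDirection.

Theorem theorem3 (c1 c2 : R)
  (hsum : Rabs c1 + Rabs c2 = 1)
  (hnz : c1 * c2 <> 0)
  (hneq : Rabs c1 <> Rabs c2) :
  exists z : R, z < 1 / 2 /\ in_spectrum c1 c2 z.
Proof.
  apply (spectrum_below c1 c2 hsum), (exists_negative_form c1 c2 hsum hneq).
Qed.
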